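(* Let $n\ge 1$ and $k\ge 1$ be natural numbers and let $$\phi_k \;=\; \Box \bigvee_{i=1}^k \Big(p_i\wedge \bigwedge_{j\neq i} \neg p_j\Big) \;\to\; \lozenge \bigvee_{i=1}^k (p_i\wedge \lozenge p_i).$$ Then $\phi_k$ is valid in the frame $(\mathbb{R}^n,R_{=1})$ if and only if $k<\chi(S^n)$.
   Context: Modal formulas are built from propositional variables using $\bot$, $\to$ and one unary modality $\lozenge$, with $\Box=\neg\lozenge\neg$. In the frame $(\mathbb{R}^n,R_{=1})$, $xR_{=1}y$ iff $\|x-y\|=1$ (Euclidean norm); $x\models\lozenge\varphi$ iff some $y$ with $xR_{=1}y$ satisfies $\varphi$; a formula is valid if it is true at every point under every valuation (assignment of subsets of $\mathbb{R}^n$ to variables). $S^n$ denotes the unit sphere $\{x\in\mathbb{R}^n:\|x\|=1\}$ of $\mathbb{R}^n$, regarded as a graph in which two points are adjacent iff their distance is exactly $1$, and $\chi(S^n)$ is its chromatic number (which is finite). *)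

From HB Require Import structures.
From mathcomp Require Import all_boot all_order all_algebra.
From mathcomp Require Import boolp classical_sets reals.
Set Implicit Arguments. Unset Strict Implicit. Unset Printing Implicit Defensive.
Import Order.TTheory GRing.Theory Num.Theory.
Local Open Scope ring_scope.

Inductive form : Type :=
| Var : nat -> form
| Bot : form
| Imp : form -> form -> form
| Dia : form -> form.

Definition Neg (a : form) : form := Imp a Bot.
Definition Top : form := Neg Bot.
Definition Or (a b : form) : form := Imp (Neg a) b.
Definition And (a b : form) : form := Neg (Imp a (Neg b)).
Definition Box (a : form) : form := Neg (Dia (Neg a)).
Definition bigOr (s : seq form) : form := foldr Or Bot s.
Definition bigAnd (s : seq form) : form := foldr And Top s.

Fixpoint sat (W : Type) (Rel : W -> W -> Prop) (V : nat -> W -> Prop)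
  (f : form) (x : W) : Prop :=
  match f with
  | Var i => V i x
  | Bot => False
  | Imp a b => sat Rel V a x -> sat Rel V b x
  | Dia a => exists y, Rel x y /\ sat Rel V a y
  end.

Definition valid_in (W : Type) (Rel : W -> W -> Prop) (f : form) : Prop :=
  forall (V : nat -> W -> Prop) (x : W), sat Rel V f x.

Definition eucl_norm (R : realType) (n : nat) (x : 'rV[R]_n) : R :=
  Num.sqrt (\sum_(i < n) x ord0 i ^+ 2).

Definition R_eq1 (R : realType) (n : nat) (x y : 'rV[R]_n) : Prop :=
  eucl_norm (x - y) = 1.

(* phi_k, with variables p_1..p_k encoded as Var 0 .. Var (k-1) *)
Definition phi (k : nat) : form :=
  Imp (Box (bigOr [seq And (Var i) (bigAnd [seq Neg (Var j) | j <- iota 0 k & j != i])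
                  | i <- iota 0 k]))
      (Dia (bigOr [seq And (Var i) (Dia (Var i)) | i <- iota 0 k])).

Definition sphere (R : realType) (n : nat) : Type :=
  {x : 'rV[R]_n | eucl_norm x = 1}.

Definition colorable (R : realType) (n c : nat) : Prop :=
  exists f : sphere R n -> 'I_c,
    forall x y : sphere R n, R_eq1 (proj1_sig x) (proj1_sig y) -> f x <> f y.

Lemma colorable_ex_bool (R : realType) (n : nat) :
  (exists c, colorable R n c) -> exists c, `[< colorable R n c >].
Proof. by move=> [c Hc]; exists c; apply/asboolP. Qed.

(* chromatic number: least c admitting a proper c-colouring
   (0 by convention if none exists; the paper notes it is finite) *)
Definition chi (R : realType) (n : nat) : nat :=
  match pselect (exists c, colorable R n c) with
  | left H => ex_minn (colorable_ex_bool H)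
  | right _ => 0
  end.

From Pilot Require Import Defs.
From HB Require Import structures.
From mathcomp Require Import all_boot all_order all_algebra.
From mathcomp Require Import boolp classical_sets reals.
From mathcomp Require Import ring lra.
Set Implicit Arguments. Unset Strict Implicit. Unset Printing Implicit Defensive.
Import Order.TTheory GRing.Theory Num.Theory.
Local Open Scope ring_scope.

(* The R_{=1}-successors of a point x form the sphere x + S^n.  Under a
   valuation, the antecedent of phi_k says that p_1, ..., p_k label every
   successor of x with exactly one colour, and the consequent says that some
   successor y carries a colour p_i also carried by a successor of y.  If S^n
   has no proper k-colouring, the labelling of x + S^n is improper, which
   yields such a y with its partner on the sphere itself.  Conversely, a proper
   k-colouring of S^n, used as a valuation that labels nothing off the sphere,
   refutes phi_k at the origin.  Finally chi(S^n) is finite: a grid of cubes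
   of side 1/(n+1) colours S^n properly, as two points of one cube are at
   squared distance at most n/(n+1)^2 < 1. *)

Section ModalSemantics.
Variables (W : Type) (Rel : W -> W -> Prop) (V : nat -> W -> Prop).

Lemma sat_Imp a b x : sat Rel V (Imp a b) x <-> (sat Rel V a x -> sat Rel V b x).
Proof. by []. Qed.

Lemma sat_Dia a x : sat Rel V (Dia a) x <-> exists y, Rel x y /\ sat Rel V a y.
Proof. by []. Qed.

Lemma sat_Or a b x : sat Rel V (Or a b) x <-> sat Rel V a x \/ sat Rel V b x.
Proof.
split=> [ab | [ax /(_ ax) [] | bx _ //]].
by case: (pselect (sat Rel V a x)) => ax; [left | right; apply: ab].
Qed.

Lemma sat_And a b x : sat Rel V (And a b) x <-> sat Rel V a x /\ sat Rel V b x.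
Proof.
split=> [ab | [ax bx] nab]; last exact: nab ax bx.
by split; apply: contrapT => n; apply: ab => // ax bx.
Qed.

Lemma sat_Box a x : sat Rel V (Box a) x <-> forall y, Rel x y -> sat Rel V a y.
Proof.
split=> [na y xy | all_a [y [xy nay]]]; last exact: nay (all_a y xy).
by apply: contrapT => nay; apply: na; exists y.
Qed.

Lemma sat_bigOr (T : eqType) (g : T -> Defs.form) (s : seq T) x :
  sat Rel V (bigOr (map g s)) x <-> exists2 i, i \in s & sat Rel V (g i) x.
Proof.
elim: s => [|j s IH]; first by split=> // -[].
rewrite [bigOr _]/= sat_Or IH; split.
  by case=> [gj | [i si gi]]; [exists j; rewrite ?mem_head | exists i; rewrite // inE si orbT].
by case=> i; rewrite inE => /orP[/eqP-> | si] gi; [left | right; exists i].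
Qed.

Lemma sat_bigAnd (T : eqType) (g : T -> Defs.form) (s : seq T) x :
  sat Rel V (bigAnd (map g s)) x <-> forall i, i \in s -> sat Rel V (g i) x.
Proof.
elim: s => [|j s IH]; first by split=> // _ i.
rewrite [bigAnd _]/= sat_And IH; split.
  by case=> gj gs i; rewrite inE => /orP[/eqP-> | /gs].
by move=> gall; split=> [|i si]; apply: gall; rewrite inE ?eqxx ?si ?orbT.
Qed.

Definition exactly_one_label k y :=
  exists2 i, (i < k)%N & V i y /\ forall j, (j < k)%N -> j != i -> ~ V j y.

Definition label_repeated_nearby k y :=
  exists2 i, (i < k)%N & V i y /\ exists2 z, Rel y z & V i z.

Lemma sat_exactly_one_label k y :
  sat Rel V (bigOr [seq And (Var i) (bigAnd [seq Neg (Var j) | j <- iota 0 k & j != i])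
                   | i <- iota 0 k]) y
  <-> exactly_one_label k y.
Proof.
rewrite sat_bigOr; split=> -[i].
  rewrite mem_iota => ik /sat_And[Vi /sat_bigAnd others]; exists i => //.
  by split=> // j jk ji; apply: others; rewrite mem_filter ji mem_iota.
move=> ik [Vi others]; exists i; first by rewrite mem_iota.
apply/sat_And; split=> //; apply/sat_bigAnd => j.
by rewrite mem_filter mem_iota => /andP[ji jk]; apply: others.
Qed.

Lemma sat_label_repeated_nearby k y :
  sat Rel V (bigOr [seq And (Var i) (Dia (Var i)) | i <- iota 0 k]) y
  <-> label_repeated_nearby k y.
Proof.
rewrite sat_bigOr; split=> -[i].
  by rewrite mem_iota => ik /sat_And[Vi [z [yz Vz]]]; exists i => //; split=> //; exists z.
move=> ik [Vi [z yz Vz]]; exists i; first by rewrite mem_iota.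
by apply/sat_And; split=> //; exists z.
Qed.

Lemma sat_phi k x :
  sat Rel V (phi k) x <->
  ((forall y, Rel x y -> exactly_one_label k y) ->
   exists y, Rel x y /\ label_repeated_nearby k y).
Proof.
rewrite /phi sat_Imp sat_Box sat_Dia.
by setoid_rewrite sat_exactly_one_label; setoid_rewrite sat_label_repeated_nearby.
Qed.

End ModalSemantics.

Lemma truncn_eq_sqr_le1 (R : archiRealDomainType) (a b : R) :
  0 <= a -> 0 <= b -> Num.truncn a = Num.truncn b -> (a - b) ^+ 2 <= 1.
Proof.
move=> a_ge0 b_ge0 ab.
have /andP[la ua] := truncn_itv a_ge0; have /andP[lb ub] := truncn_itv b_ge0.
move: la ua lb ub; rewrite ab -natr1; set t := (Num.truncn b)%:R; nra.
Qed.

Section UnitSphere.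
Variables (R : realType) (n : nat).
Implicit Types (x y a b : 'rV[R]_n).

Lemma eucl_normN x : eucl_norm (- x) = eucl_norm x.
Proof. by congr Num.sqrt; apply: eq_bigr => i _; rewrite mxE sqrrN. Qed.

Lemma R_eq1_addl x a b : R_eq1 (x + a) (x + b) = R_eq1 a b.
Proof. by rewrite /R_eq1 opprD addrACA subrr add0r. Qed.

Lemma R_eq1_addr x a : R_eq1 x (x + a) = (eucl_norm a = 1).
Proof. by rewrite /R_eq1 opprD addrA subrr add0r eucl_normN. Qed.

Lemma sphere_val_inj : injective (fun s : sphere R n => proj1_sig s).
Proof.
by move=> [x x1] [y y1] /= xy; subst y; rewrite (eq_irrelevance x1 y1).
Qed.

Lemma sum_sqr_eq1 x : eucl_norm x = 1 -> \sum_(i < n) x ord0 i ^+ 2 = 1.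
Proof.
move=> x1; rewrite -[RHS](expr1n _ 2) -x1 sqr_sqrtr //.
by rewrite sumr_ge0 // => i _; rewrite sqr_ge0.
Qed.

Lemma sphere_coord_bounds x i : eucl_norm x = 1 -> -1 <= x ord0 i <= 1.
Proof.
move/sum_sqr_eq1; rewrite (bigD1 i) //= => sum1.
have : 0 <= \sum_(j < n | j != i) x ord0 j ^+ 2 by apply: sumr_ge0 => j _; apply: sqr_ge0.
by move: sum1; set rest := \sum_(_ < _ | _) _ => sum1 rest_ge0; apply/andP; split; nra.
Qed.

Definition grid_cell (m : nat) x (i : 'I_n) : nat := Num.truncn ((x ord0 i + 1) * m%:R).

Lemma grid_cell_le m x i : eucl_norm x = 1 -> (grid_cell m x i <= 2 * m)%N.
Proof.
move=> /(sphere_coord_bounds i) /andP[lb ub].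
rewrite truncn_le_nat -natr1 natrM.
have m_ge0 : 0 <= (m%:R : R) by [].
nra.
Qed.

Lemma grid_cell_eq_sqr_le1 m x y i :
  eucl_norm x = 1 -> eucl_norm y = 1 -> grid_cell m x i = grid_cell m y i ->
  (x ord0 i - y ord0 i) ^+ 2 * m%:R ^+ 2 <= 1.
Proof.
move=> /(sphere_coord_bounds i) /andP[lx _] /(sphere_coord_bounds i) /andP[ly _].
have m_ge0 : 0 <= (m%:R : R) by [].
move/truncn_eq_sqr_le1 => /(_ (mulr_ge0 _ _)) /(_ (mulr_ge0 _ _)).
have -> : (x ord0 i - y ord0 i) ^+ 2 * m%:R ^+ 2 =
          ((x ord0 i + 1) * m%:R - (y ord0 i + 1) * m%:R) ^+ 2 by ring.
by apply; lra.
Qed.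

Lemma grid_cell_eq_not_R_eq1 x y :
  eucl_norm x = 1 -> eucl_norm y = 1 ->
  (forall i, grid_cell n.+1 x i = grid_cell n.+1 y i) -> ~ R_eq1 x y.
Proof.
move=> x1 y1 same_cell /sum_sqr_eq1 dist1.
have : \sum_(i < n) (x - y) ord0 i ^+ 2 * n.+1%:R ^+ 2 <= n%:R.
  rewrite -[n in _ <= n%:R]card_ord -sumr_const; apply: ler_sum => i _.
  by rewrite !mxE; apply: grid_cell_eq_sqr_le1.
rewrite -mulr_suml dist1 mul1r mulrS.
have := ler0n R n; nra.
Qed.

Lemma sphere_colorable : exists c, colorable R n c.
Proof.
pose cells := {ffun 'I_n -> 'I_(2 * n.+1).+1}.
pose cell_of (s : sphere R n) : cells := [ffun i => inord (grid_cell n.+1 (proj1_sig s) i)].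
exists #|cells|, (fun s => enum_rank (cell_of s)).
move=> [x x1] [y y1] /= xy /enum_rank_inj same; apply: grid_cell_eq_not_R_eq1 xy => // i.
have := congr1 (fun c : cells => val (c i)) same; rewrite /= !ffunE /=.
by rewrite !inordK // ltnS grid_cell_le.
Qed.

End UnitSphere.

Lemma colorable_widen (R : realType) n c c' :
  (c <= c')%N -> colorable R n c -> colorable R n c'.
Proof.
move=> le_cc' [f f_proper]; exists (fun s => widen_ord le_cc' (f s)) => s t st.
by move/(congr1 val) => /= /val_inj; apply: f_proper.
Qed.

Lemma ltn_chi (R : realType) n k : (k < chi R n)%N <-> ~ colorable R n k.
Proof.
rewrite /chi; case: pselect => [ex_col | no_col]; last by case: no_col; apply: sphere_colorable.
case: ex_minnP => c /asboolP c_col c_min; split.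
  by move=> lt_kc /asboolP /c_min; rewrite leqNgt lt_kc.
by move=> k_col; rewrite ltnNge; apply/negP => /colorable_widen /(_ c_col).
Qed.

Section PhiOnUnitDistanceFrame.
Variables (R : realType) (n k : nat).

Lemma colorable_not_valid_phi : colorable R n k -> ~ valid_in (@R_eq1 R n) (phi k).
Proof.
move=> [f f_proper] /(_ (fun i z => exists2 s, proj1_sig s = z & nat_of_ord (f s) = i) 0).
case/sat_phi => [y | y [_ [i _ [[s sy fsi] [z yz [s' s'z fs'i]]]]]]; last first.
  by apply: (f_proper s s'); [rewrite sy s'z | apply: val_inj; rewrite /= fsi fs'i].
rewrite -[y]add0r R_eq1_addr add0r => y1; pose s := exist _ y y1 : sphere R n.
exists (nat_of_ord (f s)) => //; split=> [|j _ jf [s' s'y fs'j]]; first by exists s.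
by move: jf; rewrite -fs'j (sphere_val_inj (s'y : proj1_sig s' = proj1_sig s)) eqxx.
Qed.

Lemma not_colorable_valid_phi : ~ colorable R n k -> valid_in (@R_eq1 R n) (phi k).
Proof.
move=> not_col V x; apply/sat_phi => labelled; apply: contrapT => no_witness.
have neighbour (s : sphere R n) : R_eq1 x (x + proj1_sig s).
  by rewrite R_eq1_addr; case: s.
have label (s : sphere R n) : exists i : 'I_k, V i (x + proj1_sig s).
  by have [i ik [Vi _]] := labelled _ (neighbour s); exists (Ordinal ik).
have [f Vf] := choice label; apply: not_col; exists f => s s' ss' fs.
apply: no_witness; exists (x + proj1_sig s); split=> //.
exists (nat_of_ord (f s)) => //; split=> //.
by exists (x + proj1_sig s'); rewrite ?R_eq1_addl // fs.
Qed.

End PhiOnUnitDistanceFrame.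

Theorem proposition3p13 (R : realType) (n k : nat) :
  (1 <= n)%N -> (1 <= k)%N ->
  (valid_in (@R_eq1 R n) (phi k) <-> (k < chi R n)%N).
Proof.
move=> _ _; rewrite ltn_chi; split=> [valid col | ].
  exact: colorable_not_valid_phi col valid.
exact: not_colorable_valid_phi.
Qed.
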